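(* In the setting of the context, there is a constant $c(\beta)$ such that the following holds: for all configurations $\sigma,\sigma'\in\Omega$ (depending on $n$) with $\bm S(\sigma)=\bm S(\sigma')$, there is a coupling $(\sigma_t,\sigma'_t)_{t\ge0}$ of two Glauber dynamics started at $\sigma$ and $\sigma'$ such that, with $\tau:=\min\{t\ge0:\sigma_t=\sigma'_t\}$, \[ \limsup_{n\to\infty}\mathbb P_{\sigma,\sigma'}\big(\tau>c(\beta)\,n\log n\big)=0. \]
   Context: Fix $m\ge1$, proportions $p_1,\dots,p_m>0$ with $\sum_ip_i=1$, a symmetric matrix $\mathbf K=(k_{ij})$ with all $k_{ij}>0$, and any inverse temperature $\beta\ge0$; $n$ ranges over positive integers with $np_i\in\mathbb N$. The vertex set $V=\{1,\dots,n\}$ is partitioned into blocks $G_1,\dots,G_m$ with $|G_i|=np_i$; for $v\in G_i,w\in G_j$ put $K(v,w)=k_{ij}/n$. The Glauber dynamics on $\Omega=\{-1,+1\}^V$ picks at each step a uniform random vertex $v$ and sets its spin to $\pm1$ with probability $\frac{1\pm\tanh(\beta S^v)}2$, $S^v=\sum_{w\ne v}K(v,w)\sigma(w)$. For $\sigma\in\Omega$, $\bm S(\sigma)=(S^{(1)}(\sigma),\dots,S^{(m)}(\sigma))$ with $S^{(i)}(\sigma)=\frac1n\sum_{v\in G_i}\sigma(v)$. *)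

From mathcomp Require Import all_boot all_order all_algebra.
From mathcomp Require Import all_classical all_reals all_analysis.
Set Implicit Arguments. Unset Strict Implicit. Unset Printing Implicit Defensive.
Import Order.TTheory GRing.Theory Num.Theory.
Local Open Scope ring_scope.

Section Glauber.
Variable R : realType.

Definition tanhR (x : R) : R := (expR x - expR (- x)) / (expR x + expR (- x)).

(* configurations on V = {0,...,n-1}; true encodes spin +1, false spin -1 *)
Definition Omega (n : nat) := {ffun 'I_n -> bool}.
Definition spin n (s : Omega n) (v : 'I_n) : R := if s v then 1 else -1.

Definition admissible m (p : 'I_m -> R) (n : nat) : Prop :=
  (0 < n)%N /\ forall i, exists k : nat, n%:R * p i = k%:R.

(* blk : V -> {1..m} assigns each vertex its block; |G_i| = n p_i *)
Definition block_sizes_ok m (p : 'I_m -> R) n (blk : 'I_n -> 'I_m) : Prop :=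
  forall i, #|[set v | blk v == i]|%:R = n%:R * p i.

Definition Kint m (k : 'I_m -> 'I_m -> R) n (blk : 'I_n -> 'I_m) (v w : 'I_n) : R :=
  k (blk v) (blk w) / n%:R.

Definition local_field m k n (blk : 'I_n -> 'I_m) (s : Omega n) (v : 'I_n) : R :=
  \sum_(w | w != v) Kint k blk v w * spin s w.

Definition magnetization m n (blk : 'I_n -> 'I_m) (s : Omega n) (i : 'I_m) : R :=
  (\sum_(v | blk v == i) spin s v) / n%:R.

(* one-step transition probability of the Glauber dynamics:
   choose v uniformly, set sigma(v) = +-1 w.p. (1 +- tanh(beta S^v))/2 *)
Definition glauber_P m k (beta : R) n (blk : 'I_n -> 'I_m) (s s' : Omega n) : R :=
  \sum_(v : 'I_n)
     (if [forall w, (w != v) ==> (s' w == s w)] then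
        n%:R^-1 * ((1 + (if s' v then 1 else -1) * tanhR (beta * local_field k blk s v)) / 2)
      else 0).

Definition traj n (T : nat) := {ffun 'I_T.+1 -> Omega n}.

Definition path_law m k (beta : R) n (blk : 'I_n -> 'I_m) (s0 : Omega n) T (a : traj n T) : R :=
  (if a ord0 == s0 then 1 else 0) *
  \prod_(t < T) glauber_P k beta blk (a (widen_ord (leqnSn T) t)) (a (lift ord0 t)).

Definition is_coupling m k (beta : R) n (blk : 'I_n -> 'I_m) (s0 s0' : Omega n) T
    (mu : traj n T * traj n T -> R) : Prop :=
  [/\ forall ab, 0 <= mu ab,
      forall a, \sum_(b : traj n T) mu (a, b) = path_law k beta blk s0 a
    & forall b, \sum_(a : traj n T) mu (a, b) = path_law k beta blk s0' b].

(* P(tau > T) where tau = min{t : sigma_t = sigma'_t} *)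
Definition prob_not_met n T (mu : traj n T * traj n T -> R) : R :=
  \sum_(ab : traj n T * traj n T | [forall t, ab.1 t != ab.2 t]) mu ab.

Definition horizon (c : R) (n : nat) : nat := Num.truncn (c * n%:R * ln (n%:R : R)).

End Glauber.

Arguments spin {R n}.
Arguments magnetization {R m n}.

(* If x and y have the same block magnetizations, some
   block-preserving permutation t of the sites carries x onto y (y (t u) = x u) and fixes
   every site where x and y agree.  The coupled step updates site v in the first chain and
   site t v in the second with the same spin; the two local fields coincide, so each
   marginal is a Glauber step, and the magnetizations stay equal.  Every spin probability is
   at least eta / 2 with eta = exp (- 2 beta sum_ij k_ij), so a disagreeing site v is chosen
   with probability 1/n and then, with probability at least eta / 2, both v and t v come to
   agree: the expected Hamming distance contracts by 1 - eta / n per step.  After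
   T = (2 / eta) n log n steps it is at most e / n, and P (tau > T) <= P (x_T <> y_T) is
   bounded by it. *)

From mathcomp Require Import all_boot all_order all_algebra.
From mathcomp Require Import all_classical all_reals all_analysis.
From mathcomp Require Import ring lra.
From mathcomp Require Import fingroup perm.
Import Order.TTheory GRing.Theory Num.Theory.
Local Open Scope ring_scope.

Set Implicit Arguments. Unset Strict Implicit. Unset Printing Implicit Defensive.

Section FfunCons.
Variable X : finType.
Implicit Types T : nat.

Definition fcons T (x : X) (a : {ffun 'I_T -> X}) : {ffun 'I_T.+1 -> X} :=
  [ffun i => if unlift ord0 i is Some j then a j else x].

Lemma fcons0 T x (a : {ffun 'I_T -> X}) : fcons x a ord0 = x.
Proof. by rewrite ffunE unlift_none. Qed.

Lemma fconsS T x (a : {ffun 'I_T -> X}) j : fcons x a (lift ord0 j) = a j.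
Proof. by rewrite ffunE liftK. Qed.

Lemma fcons_max T x (a : {ffun 'I_T.+1 -> X}) : fcons x a ord_max = a ord_max.
Proof. by rewrite (_ : ord_max = lift ord0 ord_max) ?fconsS //; apply: val_inj. Qed.

Lemma sum_ffunS T (R : nmodType) (F : {ffun 'I_T.+1 -> X} -> R) :
  \sum_a F a = \sum_x \sum_(a : {ffun 'I_T -> X}) F (fcons x a).
Proof.
rewrite pair_big /= (reindex (fun xa : X * {ffun 'I_T -> X} => fcons xa.1 xa.2)) //=.
exists (fun a : {ffun 'I_T.+1 -> X} => (a ord0, [ffun j => a (lift ord0 j)])) => [[x a] _|a _] /=.
  by rewrite fcons0; congr pair; apply/ffunP => j; rewrite ffunE fconsS.
by apply/ffunP => i; rewrite ffunE; case: unliftP => [j ->|->]; rewrite ?ffunE.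
Qed.

Lemma sum_ffun_started T (R : pzSemiRingType) (x0 : X) (F : {ffun 'I_T.+1 -> X} -> R) :
  \sum_(a : {ffun 'I_T.+1 -> X}) (if a ord0 == x0 then 1 else 0) * F a =
  \sum_(a : {ffun 'I_T -> X}) F (fcons x0 a).
Proof.
rewrite sum_ffunS (bigD1 x0) //= [X in _ + X]big1 ?addr0.
  by apply: eq_bigr => a _; rewrite fcons0 eqxx mul1r.
by move=> x /negbTE x_neq; apply: big1 => a _; rewrite fcons0 x_neq mul0r.
Qed.

Lemma sum_ffun_ord0 (R : pzSemiRingType) (c : R) : \sum_(a : {ffun 'I_0 -> X}) c = c.
Proof. by rewrite sumr_const card_ffun card_ord expn0. Qed.

End FfunCons.

Lemma sum_indicator1 (R : pzSemiRingType) (I : finType) (i0 : I) (F : I -> R) :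
  \sum_i (if i == i0 then 1 else 0) * F i = F i0.
Proof.
rewrite (bigD1 i0) //= eqxx mul1r big1 ?addr0 // => i /negbTE ->; exact: mul0r.
Qed.

Section PathSums.
Variable R : comPzSemiRingType.

Definition chain_weight (Z : Type) (P : Z -> Z -> R) T (g : 'I_T.+1 -> Z) : R :=
  \prod_(t < T) P (g (widen_ord (leqnSn T) t)) (g (lift ord0 t)).

Lemma eq_chain_weight (Z : Type) (P : Z -> Z -> R) T (g g' : 'I_T.+1 -> Z) :
  g =1 g' -> chain_weight P g = chain_weight P g'.
Proof. by move=> eq_g; apply: eq_bigr => t _; rewrite !eq_g. Qed.

Lemma chain_weightS (Z : Type) (P : Z -> Z -> R) T (g : 'I_T.+2 -> Z) :
  chain_weight P g = P (g ord0) (g (lift ord0 ord0)) * chain_weight P (g \o lift ord0).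
Proof.
rewrite /chain_weight big_ord_recl; congr (P (g _) _ * _); first exact: val_inj.
by apply: eq_bigr => t _; congr (P (g _) _); apply: val_inj.
Qed.

Variables (X Y : finType).

Lemma chain_weight_marginal (Q : X * Y -> X * Y -> R) (P : X -> X -> R) T
    (a : 'I_T.+1 -> X) (y0 : Y) :
  (forall x y x', \sum_y' Q (x, y) (x', y') = P x x') ->
  \sum_(b : {ffun 'I_T.+1 -> Y})
    (if b ord0 == y0 then 1 else 0) * chain_weight Q (fun t => (a t, b t))
  = chain_weight P a.
Proof.
move=> Q_marg; elim: T a y0 => [|T IH] a y0; rewrite sum_ffun_started.
  by rewrite -[RHS](sum_ffun_ord0 Y); apply: eq_bigr => b _; rewrite /chain_weight !big_ord0.
transitivity (\sum_y Q (a ord0, y0) (a (lift ord0 ord0), y) *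
    \sum_(b : {ffun 'I_T.+1 -> Y})
      (if b ord0 == y then 1 else 0) * chain_weight Q (fun t => (a (lift ord0 t), b t))).
  rewrite sum_ffunS; apply: eq_bigr => y _.
  rewrite sum_ffun_started mulr_sumr; apply: eq_bigr => b _.
  rewrite chain_weightS /= !fcons0 !fconsS fcons0; congr (_ * _).
  by apply: eq_chain_weight => t /=; rewrite fconsS.
under eq_bigr do rewrite (IH (a \o lift ord0)).
by rewrite -mulr_suml Q_marg chain_weightS.
Qed.

Fixpoint iter_kernel (Z : finType) (Q : Z -> Z -> R) T (f : Z -> R) (z : Z) : R :=
  if T is T'.+1 then \sum_z' Q z z' * iter_kernel Q T' f z' else f z.

(* The initial weight [G] is arbitrary so that the induction goes through. *)
Lemma chain_weight_expectation (Q : X * Y -> X * Y -> R) (f : X * Y -> R) T (G : X -> Y -> R) :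
  \sum_(a : {ffun 'I_T.+1 -> X}) \sum_(b : {ffun 'I_T.+1 -> Y})
    G (a ord0) (b ord0) * (chain_weight Q (fun t => (a t, b t)) * f (a ord_max, b ord_max))
  = \sum_x \sum_y G x y * iter_kernel Q T f (x, y).
Proof.
elim: T G => [|T IH] G.
  rewrite sum_ffunS; apply: eq_bigr => x _; rewrite -[RHS](sum_ffun_ord0 X).
  apply: eq_bigr => a _; rewrite sum_ffunS; apply: eq_bigr => y _.
  rewrite -[RHS](sum_ffun_ord0 Y); apply: eq_bigr => b _.
  by rewrite /chain_weight big_ord0 mul1r (_ : ord_max = ord0) ?fcons0 //; apply: val_inj.
transitivity (\sum_x \sum_y G x y *
  \sum_(a : {ffun 'I_T.+1 -> X}) \sum_(b : {ffun 'I_T.+1 -> Y})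
    Q (x, y) (a ord0, b ord0) * (chain_weight Q (fun t => (a t, b t)) * f (a ord_max, b ord_max))).
  rewrite sum_ffunS; apply: eq_bigr => x _; rewrite exchange_big sum_ffunS.
  apply: eq_bigr => y _; rewrite exchange_big.
  rewrite mulr_sumr; apply: eq_bigr => a _; rewrite mulr_sumr; apply: eq_bigr => b _.
  rewrite chain_weightS /= !fcons0 !fconsS !fcons_max !mulrA; congr (_ * _ * _).
  by apply: eq_chain_weight => t /=; rewrite !fconsS.
apply: eq_bigr => x _; apply: eq_bigr => y _; rewrite (IH (fun x' y' => Q (x, y) (x', y'))) /=.
by rewrite pair_big; congr (_ * _); apply: eq_bigr => -[].
Qed.

End PathSums.

Section CoupledPathLaw.
Variables (R : comPzSemiRingType) (X Y : finType).

Definition coupled_path_law (Q : X * Y -> X * Y -> R) (x0 : X) (y0 : Y) T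
    (ab : {ffun 'I_T.+1 -> X} * {ffun 'I_T.+1 -> Y}) : R :=
  (if ab.1 ord0 == x0 then 1 else 0) * (if ab.2 ord0 == y0 then 1 else 0) *
  chain_weight Q (fun t => (ab.1 t, ab.2 t)).

Lemma coupled_path_law_marginl Q (P : X -> X -> R) x0 y0 T (a : {ffun 'I_T.+1 -> X}) :
  (forall x y x', \sum_y' Q (x, y) (x', y') = P x x') ->
  \sum_b coupled_path_law Q x0 y0 (a, b) =
  (if a ord0 == x0 then 1 else 0) * chain_weight P a.
Proof.
move=> Q_marg; rewrite -(chain_weight_marginal _ y0 Q_marg) mulr_sumr.
by apply: eq_bigr => b _; rewrite /coupled_path_law mulrA.
Qed.

Lemma coupled_path_law_marginr Q (P : Y -> Y -> R) x0 y0 T (b : {ffun 'I_T.+1 -> Y}) :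
  (forall x y y', \sum_x' Q (x, y) (x', y') = P y y') ->
  \sum_a coupled_path_law Q x0 y0 (a, b) =
  (if b ord0 == y0 then 1 else 0) * chain_weight P b.
Proof.
move=> Q_marg; pose Qswap (z z' : Y * X) := Q (z.2, z.1) (z'.2, z'.1).
have Qswap_marg y x y' : \sum_x' Qswap (y, x) (y', x') = P y y' by exact: Q_marg.
rewrite -(chain_weight_marginal _ x0 Qswap_marg) mulr_sumr.
(* [chain_weight Qswap] along the swapped path is convertible to [chain_weight Q]. *)
apply: eq_bigr => a _.
by rewrite /coupled_path_law /= mulrA (mulrC (if b ord0 == _ then _ else _)).
Qed.

Lemma coupled_path_law_expectation Q (f : X * Y -> R) x0 y0 T :
  \sum_(ab : {ffun 'I_T.+1 -> X} * {ffun 'I_T.+1 -> Y})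
    coupled_path_law Q x0 y0 ab * f (ab.1 ord_max, ab.2 ord_max) =
  iter_kernel Q T f (x0, y0).
Proof.
pose G x y : R := (if x == x0 then 1 else 0) * (if y == y0 then 1 else 0).
rewrite -(pair_bigA _ (fun a b => coupled_path_law Q x0 y0 (a, b) * f (a ord_max, b ord_max))).
under eq_bigr do under eq_bigr do rewrite /coupled_path_law /= -mulrA.
rewrite (chain_weight_expectation Q f T G) /G.
under eq_bigr do under eq_bigr do rewrite -mulrA.
under eq_bigr do rewrite -mulr_sumr sum_indicator1.
exact: sum_indicator1.
Qed.

End CoupledPathLaw.

Section NonnegativeKernels.
Variable R : numDomainType.

Lemma coupled_path_law_ge0 (X Y : finType) (Q : X * Y -> X * Y -> R) x0 y0 T ab :
  (forall z z', 0 <= Q z z') -> 0 <= @coupled_path_law R X Y Q x0 y0 T ab.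
Proof.
by move=> Q_ge0; rewrite /coupled_path_law !mulr_ge0 ?prodr_ge0 //; case: ifP.
Qed.

Lemma iter_kernel_le (Z : finType) (Q : Z -> Z -> R) (S : pred Z) (h : Z -> R) (l : R) T z :
  (forall z z', 0 <= Q z z') -> 0 <= l ->
  (forall z z', S z -> ~~ S z' -> Q z z' = 0) ->
  (forall z, S z -> \sum_z' Q z z' * h z' <= l * h z) ->
  S z -> iter_kernel Q T h z <= l ^+ T * h z.
Proof.
move=> Q_ge0 l_ge0 S_closed drift; elim: T z => [|T IH] z Sz /=; first by rewrite mul1r.
apply: (@le_trans _ _ (\sum_z' Q z z' * (l ^+ T * h z'))).
  apply: ler_sum => z' _; have [Sz'|nSz'] := boolP (S z').
    by rewrite ler_wpM2l ?IH.
  by rewrite S_closed ?mul0r.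
under eq_bigr do rewrite mulrCA.
by rewrite -mulr_sumr exprSr -mulrA ler_wpM2l ?exprn_ge0 ?drift.
Qed.

End NonnegativeKernels.

Section Tanh.
Variable R : realType.

Lemma tanhRN (z : R) : tanhR (- z) = - tanhR z.
Proof. by rewrite /tanhR opprK -mulNr opprB (addrC (expR z)). Qed.

Lemma tanh_probE (z : R) : (1 + tanhR z) / 2 = expR z / (expR z + expR (- z)).
Proof.
have Ez := expR_gt0 z; have ENz := expR_gt0 (- z).
by rewrite /tanhR; field; rewrite gt_eqF ?addr_gt0.
Qed.

Lemma tanh_prob_lb (M z : R) : `|z| <= M -> expR (- (2 * M)) / 2 <= (1 + tanhR z) / 2.
Proof.
rewrite ler_norml => /andP [Mz zM].
have sum_le : expR z + expR (- z) <= 2 * expR M.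
  by rewrite mulr2n mulrDl mul1r lerD // ler_expR // lerNl.
have lb_le : expR (- (2 * M)) * expR M <= expR z.
  by rewrite -expRD ler_expR; lra.
have E2M := expR_gt0 (- (2 * M)).
rewrite tanh_probE ler_pdivlMr ?addr_gt0 ?expR_gt0 //; nra.
Qed.

End Tanh.

Lemma sum_if_and_eq (R : nmodType) (I : finType) (i0 : I) (b : bool) (c : R) :
  \sum_i (if b && (i == i0) then c else 0) = if b then c else 0.
Proof. by rewrite (bigD1 i0) //= eqxx andbT big1 ?addr0 // => i /negbTE ->; rewrite andbF. Qed.

Lemma sumD2 (R : nmodType) (I : finType) (F : I -> R) v w : v != w ->
  \sum_u F u = F v + F w + \sum_(u | (u != v) && (u != w)) F u.
Proof.
move=> vw; rewrite (bigD1 v) //= (bigD1 w) 1?eq_sym //= addrA.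
by congr (_ + _); apply: eq_bigl => u; rewrite andbC.
Qed.

Lemma normr_sign (R : numDomainType) (b : bool) : `|(if b then 1 else -1) : R| = 1.
Proof. by case: b; rewrite ?normrN normr1. Qed.

Section GlauberKernel.
Variables (R : realType) (m : nat) (k : 'I_m -> 'I_m -> R) (beta : R).
Variables (n : nat) (blk : 'I_n -> 'I_m).
Implicit Types (x y : Omega n) (v w : 'I_n) (s : bool).

Definition set_spin x v s : Omega n := [ffun u => if u == v then s else x u].

Definition spin_prob x v s : R :=
  (1 + (if s then 1 else -1) * tanhR (beta * local_field k blk x v)) / 2.

Lemma spin_prob_tanh x v s :
  spin_prob x v s = (1 + tanhR ((if s then 1 else -1) * (beta * local_field k blk x v))) / 2.
Proof. by rewrite /spin_prob; case: s; rewrite ?mul1r ?mulN1r ?tanhRN. Qed.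

Lemma spin_prob_sum x v : spin_prob x v true + spin_prob x v false = 1.
Proof. by rewrite /spin_prob; field. Qed.

Lemma spin_prob_ge0 x v s : 0 <= spin_prob x v s.
Proof.
rewrite spin_prob_tanh; apply: le_trans (tanh_prob_lb (lexx _)).
by rewrite divr_ge0 ?ltW ?expR_gt0.
Qed.

Lemma set_spin_eq x x' v s : [forall w, (w != v) ==> (x' w == x w)] ->
  (x' == set_spin x v s) = (x' v == s).
Proof.
move/forallP => x'_x; apply/eqP/eqP => [->|<-]; first by rewrite ffunE eqxx.
apply/ffunP => u; rewrite ffunE; case: eqP => [->|/eqP u_v] //.
exact/eqP/(implyP (x'_x u)).
Qed.

Lemma set_spin_neq x x' v s : ~~ [forall w, (w != v) ==> (x' w == x w)] ->
  (x' == set_spin x v s) = false.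
Proof.
apply: contraNF => /eqP ->; apply/forallP => w; apply/implyP => /negbTE w_v.
by rewrite ffunE w_v.
Qed.

Lemma glauber_PE x x' : glauber_P k beta blk x x' =
  \sum_v \sum_s (if x' == set_spin x v s then n%:R^-1 * spin_prob x v s else 0).
Proof.
apply: eq_bigr => v _; rewrite big_bool /=.
case: (boolP [forall w, _]) => [x'_x|x'_x]; last by rewrite !set_spin_neq // addr0.
by rewrite !set_spin_eq //; case: (x' v); rewrite ?addr0 ?add0r.
Qed.

Lemma glauber_P_ge0 x x' : 0 <= glauber_P k beta blk x x'.
Proof.
rewrite glauber_PE; apply: sumr_ge0 => v _; apply: sumr_ge0 => s _.
by case: ifP => // _; rewrite mulr_ge0 ?invr_ge0 ?ler0n ?spin_prob_ge0.
Qed.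

Hypothesis n_gt0 : (0 < n)%N.

Lemma glauber_P_sum1 x : \sum_x' glauber_P k beta blk x x' = 1.
Proof.
under eq_bigr do rewrite glauber_PE.
rewrite exchange_big /= (eq_bigr (fun=> n%:R^-1)) => [|v _].
  by rewrite sumr_const card_ord -[_ *+ n]mulr_natr mulVf // pnatr_eq0 -lt0n.
by rewrite exchange_big /= big_bool /= -!big_mkcond !big_pred1_eq -mulrDr spin_prob_sum mulr1.
Qed.

Definition matching (t : {perm 'I_n}) x y : bool :=
  [forall u, [&& blk (t u) == blk u, y (t u) == x u & (x u == y u) ==> (t u == u)]].

Lemma matchingP t x y : matching t x y ->
  [/\ forall u, blk (t u) = blk u, forall u, y (t u) = x u & forall u, x u = y u -> t u = u].
Proof.
move/forallP => tP; split=> u; have /and3P [/eqP ? /eqP ? /implyP fix_u] := tP u => //.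
by move/eqP/fix_u/eqP.
Qed.

Definition matched_step (t : {perm 'I_n}) (z z' : Omega n * Omega n) : R :=
  \sum_v \sum_s (if (z'.1 == set_spin z.1 v s) && (z'.2 == set_spin z.2 (t v) s)
                 then n%:R^-1 * spin_prob z.1 v s else 0).

(* The product coupling is only a filler: started from a balanced pair, the coupled chain
   stays in the balanced set, where a matching always exists. *)
Definition coupling_kernel (z z' : Omega n * Omega n) : R :=
  if [pick t | matching t z.1 z.2] is Some t then matched_step t z z'
  else glauber_P k beta blk z.1 z'.1 * glauber_P k beta blk z.2 z'.2.

Lemma local_field_matching t x y v :
  matching t x y -> local_field k blk y (t v) = local_field k blk x v.
Proof.
case/matchingP => t_blk t_spin _; rewrite /local_field (reindex_inj (@perm_inj _ t)) /=.
apply: eq_big => [u|u _]; first by rewrite (inj_eq perm_inj).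
by rewrite /Kint !t_blk /spin t_spin.
Qed.

Lemma spin_prob_matching t x y v s :
  matching t x y -> spin_prob y (t v) s = spin_prob x v s.
Proof. by move=> txy; rewrite /spin_prob (local_field_matching v txy). Qed.

Lemma coupling_kernel_ge0 z z' : 0 <= coupling_kernel z z'.
Proof.
rewrite /coupling_kernel; case: pickP => [t _|_]; last by rewrite mulr_ge0 ?glauber_P_ge0.
apply: sumr_ge0 => v _; apply: sumr_ge0 => s _.
by case: ifP => // _; rewrite mulr_ge0 ?invr_ge0 ?ler0n ?spin_prob_ge0.
Qed.

Lemma coupling_kernel_marginl x y x' :
  \sum_y' coupling_kernel (x, y) (x', y') = glauber_P k beta blk x x'.
Proof.
rewrite /coupling_kernel /=; case: pickP => [t _|_].
  2: by rewrite -mulr_sumr glauber_P_sum1 mulr1.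
rewrite exchange_big glauber_PE /=; apply: eq_bigr => v _.
by rewrite exchange_big; apply: eq_bigr => s _; rewrite sum_if_and_eq.
Qed.

Lemma coupling_kernel_marginr x y y' :
  \sum_x' coupling_kernel (x, y) (x', y') = glauber_P k beta blk y y'.
Proof.
rewrite /coupling_kernel /=; case: pickP => [t txy|_].
  2: by rewrite -mulr_suml glauber_P_sum1 mul1r.
rewrite exchange_big glauber_PE /= [RHS](reindex_inj (@perm_inj _ t)) /=; apply: eq_bigr => v _.
rewrite exchange_big; apply: eq_bigr => s _ /=.
by under eq_bigr do rewrite andbC; rewrite sum_if_and_eq (spin_prob_matching _ _ txy).
Qed.

Definition balanced (z : Omega n * Omega n) : bool :=
  [forall i, magnetization (R := R) blk z.1 i == magnetization blk z.2 i].

Lemma magnetization_perm (t : {perm 'I_n}) x x' i :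
  (forall u, blk (t u) = blk u) -> (forall u, x' u = x (t u)) ->
  magnetization blk x' i = magnetization blk x i :> R.
Proof.
move=> t_blk x'_x; rewrite /magnetization [in RHS](reindex_inj (@perm_inj _ t)) /=.
by congr (_ / _); apply: eq_big => [u|u _]; rewrite ?t_blk // /spin x'_x.
Qed.

Lemma balanced_sym x y : balanced (x, y) -> balanced (y, x).
Proof. by move/forallP => xy; apply/forallP => i; rewrite eq_sym xy. Qed.

Lemma balanced_block_sum x y i : balanced (x, y) ->
  \sum_(v | blk v == i) spin x v = \sum_(v | blk v == i) spin y v :> R.
Proof.
move/forallP/(_ i)/eqP; rewrite /magnetization => /(congr1 ( *%R^~ n%:R)).
by rewrite !divfK // pnatr_eq0 -lt0n.
Qed.

Lemma balanced_partner x y u : balanced (x, y) -> x u -> ~~ y u ->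
  exists w, [/\ blk w = blk u, ~~ x w & y w].
Proof.
move=> /(balanced_block_sum (blk u)) bal xu yu.
have [w /and3P [/eqP ? ? ?]|none] := pickP [pred w | [&& blk w == blk u, ~~ x w & y w]].
  by exists w.
have : \sum_(w | (blk w == blk u) && (w != u)) spin y w <=
       \sum_(w | (blk w == blk u) && (w != u)) spin x w :> R.
  apply: ler_sum => w /andP [/eqP w_blk _]; have := none w; rewrite /= w_blk eqxx /spin.
  by case: (x w); case: (y w).
move: bal; rewrite (bigD1 u) //= [in X in _ = X](bigD1 u) //= /spin xu (negbTE yu).
lra.
Qed.

Lemma balanced_swap_pair x y u : balanced (x, y) -> x u != y u ->
  exists v w, [/\ blk v = blk w, x v && ~~ y v & ~~ x w && y w].
Proof.
move=> bal; case xu: (x u); case yu: (y u) => // _.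
  have [w [? xw yw]] := balanced_partner bal xu (negbT yu).
  by exists u, w; rewrite xu yu xw yw.
have [v [? yv xv]] := balanced_partner (balanced_sym bal) yu (negbT xu).
by exists v, u; rewrite xu yu xv yv.
Qed.

Lemma matching1 x : matching 1 x x.
Proof. by apply/forallP => u; rewrite !perm1 !eqxx. Qed.

Lemma tperm_blk v w u : blk v = blk w -> blk (tperm v w u) = blk u.
Proof. by move=> vw_blk; case: tpermP => // ->. Qed.

Lemma matching_tperm v w t x y :
  blk v = blk w -> x v && ~~ y v -> ~~ x w && y w ->
  matching t [ffun u => x (tperm v w u)] y -> matching (tperm v w * t) x y.
Proof.
move=> vw_blk /andP [xv yv] /andP [xw yw] /matchingP [t_blk t_spin t_fix].
apply/forallP => u; rewrite permM t_blk tperm_blk // t_spin ffunE tpermK !eqxx /=.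
apply/implyP => /eqP xu_yu.
have uv : v != u by apply: contraNneq yv => vu; rewrite vu -xu_yu -vu.
have uw : w != u by apply: contraNneq xw => wu; rewrite wu xu_yu -wu.
by rewrite tpermD // t_fix // ffunE tpermD.
Qed.

Lemma card_disagree_tperm v w x y : x v && ~~ y v -> ~~ x w && y w ->
  (#|[set u | [ffun u => x (tperm v w u)] u != y u]| < #|[set u | x u != y u]|)%N.
Proof.
move=> /andP [xv yv] /andP [xw yw]; apply: proper_card; apply/properP; split.
  apply/fintype.subsetP => u; rewrite !inE ffunE.
  by case: tpermP => [->|->|//]; [rewrite (negbTE yv) (negbTE xw) | rewrite yw xv].
by exists v; rewrite !inE ?ffunE ?tpermL ?xv ?(negbTE yv) ?(negbTE xw).
Qed.

Lemma exists_matching x y : balanced (x, y) -> exists t, matching t x y.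
Proof.
have [N] := ubnP #|[set u | x u != y u]|; elim: N x => // N IH x D_lt bal.
case: (pickP [pred u | x u != y u]) => [u0 /= xy_u0|agree]; last first.
  have -> : x = y by apply/ffunP => u; apply/eqP/negbFE/agree.
  by exists 1%g; apply: matching1.
have [v [w [vw_blk vP wP]]] := balanced_swap_pair bal xy_u0.
have bal2 : balanced ([ffun u => x (tperm v w u)], y).
  apply/forallP => i; rewrite (@magnetization_perm (tperm v w) x) ?(eqP (forallP bal i)) //.
    by move=> u; apply: tperm_blk.
  by move=> u; rewrite ffunE.
have [|t t_match] := IH _ _ bal2; first exact: leq_trans (card_disagree_tperm vP wP) _.
by exists (tperm v w * t)%g; apply: matching_tperm.
Qed.

Lemma set_spin_matching t x y v s : matching t x y ->
  forall u, set_spin y (t v) s (t u) = set_spin x v s u.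
Proof.
by case/matchingP => _ t_spin _ u; rewrite !ffunE (inj_eq perm_inj); case: eqP.
Qed.

Lemma coupling_kernel_balanced z : balanced z ->
  exists2 t, matching t z.1 z.2 & forall z', coupling_kernel z z' = matched_step t z z'.
Proof.
move=> bal; rewrite /coupling_kernel; case: pickP => [t txy|]; first by exists t.
by have [t0 t0xy] := exists_matching bal => /(_ t0); rewrite t0xy.
Qed.

Lemma coupling_kernel_unbalanced z z' : balanced z -> ~~ balanced z' -> coupling_kernel z z' = 0.
Proof.
case: z z' => [x y] [x' y'] /coupling_kernel_balanced [t /= txy ->] /negP unbal'.
apply: big1 => v _; apply: big1 => s _; case: ifP => //= /andP [/eqP x'E /eqP y'E].
case: unbal'; apply/forallP => i /=.
rewrite x'E y'E (magnetization_perm (t := t) (x := set_spin y (t v) s)) //.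
  by case/matchingP: txy.
by move=> u; rewrite (set_spin_matching _ _ txy).
Qed.

Definition hamming (z : Omega n * Omega n) : R := \sum_u (if z.1 u != z.2 u then 1 else 0).

Lemma hamming_set_spin t x y v s : matching t x y ->
  hamming (set_spin x v s, set_spin y (t v) s) =
  hamming (x, y) - 2 * (if (x v != y v) && (s != x v) then 1 else 0).
Proof.
move=> txy; case/matchingP: (txy) => _ t_spin t_fix; rewrite /hamming /=.
have [xy_v|xy_v] := eqVneq (x v) (y v).
  rewrite t_fix // mulr0 subr0; apply: eq_bigr => u _; rewrite !ffunE.
  by case: (u =P v) => [->|]; rewrite ?xy_v ?eqxx.
set w := t v.
have yw : y w = x v by rewrite t_spin.
have vw : v != w by apply: contra_neq xy_v => vw; rewrite [in y v]vw yw.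
have xy_w : x w != y w.
  by apply: contra_neq vw => /t_fix wE; apply: (@perm_inj _ t); rewrite -/w wE.
rewrite (sumD2 _ vw) [in RHS](sumD2 _ vw) !ffunE !eqxx (eq_sym w) (negbTE vw).
rewrite (eq_bigr (fun u => if x u != y u then 1 else 0)) => [|u /andP [uv uw]]; last first.
  by rewrite !ffunE (negbTE uv) (negbTE uw).
move: xy_v xy_w yw; case: (x v); case: (y v); case: (x w); case: (y w); case: s => //= *; lra.
Qed.

Lemma matched_step_expectation t z (f : Omega n * Omega n -> R) :
  \sum_z' matched_step t z z' * f z' =
  \sum_v \sum_s n%:R^-1 * spin_prob z.1 v s * f (set_spin z.1 v s, set_spin z.2 (t v) s).
Proof.
under eq_bigr do rewrite mulr_suml.
rewrite exchange_big; apply: eq_bigr => v _ /=.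
under eq_bigr do rewrite mulr_suml.
rewrite exchange_big; apply: eq_bigr => s _ /=.
rewrite (bigD1 (set_spin z.1 v s, set_spin z.2 (t v) s)) //= !eqxx /= big1 ?addr0 // => -[x' y'].
by rewrite xpair_eqE => /negbTE ->; rewrite mul0r.
Qed.

Lemma hamming_site_drift t x y v d : matching t x y -> (forall s, d <= spin_prob x v s) ->
  \sum_s spin_prob x v s * hamming (set_spin x v s, set_spin y (t v) s) <=
  hamming (x, y) - 2 * d * (if x v != y v then 1 else 0).
Proof.
move=> txy d_le; rewrite big_bool /= !(hamming_set_spin _ _ txy).
move: (spin_prob_sum x v) (d_le true) (d_le false).
by case: (x v); case: (y v) => /=; nra.
Qed.

Lemma coupling_kernel_contract z eta : (forall x v s, eta / 2 <= spin_prob x v s) ->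
  balanced z -> \sum_z' coupling_kernel z z' * hamming z' <= (1 - eta / n%:R) * hamming z.
Proof.
case: z => x y eta_le /coupling_kernel_balanced [t /= txy kernelE].
under eq_bigr do rewrite kernelE; rewrite matched_step_expectation /=.
apply: (@le_trans _ _
  (\sum_v n%:R^-1 * (hamming (x, y) - 2 * (eta / 2) * (if x v != y v then 1 else 0)))).
  apply: ler_sum => v _; under eq_bigr do rewrite -mulrA.
  by rewrite -mulr_sumr ler_wpM2l ?invr_ge0 ?ler0n ?hamming_site_drift.
rewrite -mulr_sumr sumrB sumr_const card_ord -mulr_sumr -/(hamming (x, y)).
rewrite le_eqVlt; apply/orP; left.
by apply/eqP; field; rewrite pnatr_eq0 -lt0n.
Qed.

Definition ktot : R := \sum_i \sum_j k i j.

Hypothesis k_ge0 : forall i j, 0 <= k i j.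

Lemma ktot_ge0 : 0 <= ktot.
Proof. by rewrite sumr_ge0 // => i _; rewrite sumr_ge0. Qed.

Lemma k_le_ktot i j : k i j <= ktot.
Proof.
have k_le_row : k i j <= \sum_j' k i j'.
  by rewrite (bigD1 j) //= lerDl sumr_ge0.
apply: le_trans k_le_row _; rewrite /ktot [leRHS](bigD1 i) //= lerDl.
by rewrite sumr_ge0 // => i' _; rewrite sumr_ge0.
Qed.

Lemma local_field_le x v : `|local_field k blk x v| <= ktot.
Proof.
apply: le_trans (ler_norm_sum _ _ _) _.
apply: (@le_trans _ _ (\sum_(w | w != v) ktot / n%:R)).
  apply: ler_sum => w _.
  rewrite normrM /spin normr_sign mulr1 /Kint ger0_norm ?divr_ge0 ?ler0n //.
  by rewrite ler_wpM2r ?invr_ge0 ?ler0n ?k_le_ktot.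
apply: (@le_trans _ _ (\sum_(w < n) ktot / n%:R)).
  rewrite [leRHS](bigID (fun w => w != v)) /= lerDl.
  by rewrite sumr_ge0 // => w _; rewrite divr_ge0 ?ler0n ?ktot_ge0.
by rewrite sumr_const card_ord -[_ *+ n]mulr_natr divfK // pnatr_eq0 -lt0n.
Qed.

Lemma spin_prob_lb x v s : 0 <= beta ->
  expR (- (2 * (beta * ktot))) / 2 <= spin_prob x v s.
Proof.
move=> beta_ge0; rewrite spin_prob_tanh tanh_prob_lb // normrM normr_sign.
by rewrite mul1r normrM ger0_norm // ler_wpM2l ?local_field_le.
Qed.

Lemma hamming_ge0 z : 0 <= hamming z.
Proof. by rewrite sumr_ge0 // => u _; case: ifP. Qed.

Lemma hamming_le z : hamming z <= n%:R.
Proof.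
rewrite -[n in n%:R]card_ord -sumr_const.
by apply: ler_sum => u _; case: ifP.
Qed.

Lemma hamming_ge1 x y : x != y -> 1 <= hamming (x, y).
Proof.
move=> /eqP xy; have [u xy_u] : exists u, x u != y u.
  by apply/existsP; apply: contra_notT xy => /existsPn xy_eq; apply/ffunP => u; apply/eqP/negPn.
by rewrite /hamming (bigD1 u) //= xy_u lerDl sumr_ge0 // => w _; case: ifP.
Qed.

Lemma prob_not_met_le_hamming T (mu : traj n T * traj n T -> R) : (forall ab, 0 <= mu ab) ->
  prob_not_met mu <= \sum_ab mu ab * hamming (ab.1 ord_max, ab.2 ord_max).
Proof.
move=> mu_ge0.
rewrite [leRHS](bigID [pred ab : traj n T * traj n T | [forall t, ab.1 t != ab.2 t]]) /=.
rewrite -[leLHS]addr0 lerD ?sumr_ge0 // => [|ab _]; last by rewrite mulr_ge0 ?hamming_ge0.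
by apply: ler_sum => ab /forallP/(_ ord_max) ab_neq; rewrite ler_peMr ?hamming_ge1.
Qed.

Lemma glauber_coupling_tail T eta x0 y0 :
  (forall x v s, eta / 2 <= spin_prob x v s) -> balanced (x0, y0) ->
  prob_not_met (coupled_path_law coupling_kernel x0 y0 (T := T)) <=
  (1 - eta / n%:R) ^+ T * n%:R.
Proof.
move=> eta_le bal.
have eta_le1 : eta <= 1.
  pose v0 := Ordinal n_gt0; move: (spin_prob_sum x0 v0) (eta_le x0 v0 true) (eta_le x0 v0 false).
  lra.
have l_ge0 : 0 <= 1 - eta / n%:R.
  by rewrite subr_ge0 ler_pdivrMr ?ltr0n // mul1r (le_trans eta_le1) // ler1n.
apply: le_trans (prob_not_met_le_hamming _) _ => [ab|].
  by rewrite coupled_path_law_ge0 // => *; apply: coupling_kernel_ge0.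
rewrite coupled_path_law_expectation.
apply: le_trans (iter_kernel_le T _ l_ge0 _ _ bal) _.
- exact: coupling_kernel_ge0.
- exact: coupling_kernel_unbalanced.
- by move=> z; apply: coupling_kernel_contract.
- by rewrite ler_wpM2l ?exprn_ge0 ?hamming_le.
Qed.

End GlauberKernel.

Lemma horizon_tail (R : realType) (eta : R) n : 0 < eta -> eta <= 1 -> (0 < n)%N ->
  (1 - eta / n%:R) ^+ horizon (2 / eta) n * n%:R <= expR 1 / n%:R.
Proof.
move=> eta_gt0 eta_le1 n_gt0; set T := horizon _ n; set L := ln (n%:R : R).
have n_gt0' : (0 : R) < n%:R by rewrite ltr0n.
have step_le1 : eta / n%:R <= 1 by rewrite ler_pdivrMr // mul1r (le_trans eta_le1) // ler1n.
have pow_le : (1 - eta / n%:R) ^+ T <= expR (T%:R * - (eta / n%:R)).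
  by rewrite expRM_natl lerXn2r ?nnegrE ?subr_ge0 ?expR_ge0 ?expR_ge1Dx.
have T_gt : 2 / eta * n%:R * L - 1 < T%:R.
  by rewrite ltrBlDr natr1; apply: truncnS_gt.
have exponent_le : T%:R * - (eta / n%:R) <= 1 - 2 * L.
  have : (2 / eta * n%:R * L - 1) * (eta / n%:R) = 2 * L - eta / n%:R.
    by field; rewrite !gt_eqF.
  have : 0 <= eta / n%:R by rewrite divr_ge0 // ltW.
  nra.
have expR_L : expR L = n%:R by rewrite lnK // posrE.
apply: (@le_trans _ _ (expR (1 - 2 * L) * n%:R)).
  by rewrite ler_wpM2r ?ler0n // (le_trans pow_le) // ler_expR.
rewrite (_ : 1 - 2 * L = 1 - L - L) ?expRD ?expRN ?expR_L; first by rewrite mulrAC mulfVK ?gt_eqF.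
by rewrite mulr2n mulrDl mul1r opprD addrA.
Qed.

Theorem lemma4p13 (R : realType) (m : nat) (p : 'I_m -> R) (k : 'I_m -> 'I_m -> R)
    (beta : R)
    (Hm : (0 < m)%N)
    (Hp : forall i, 0 < p i) (Hpsum : \sum_(i < m) p i = 1)
    (Hk : forall i j, 0 < k i j) (Hksym : forall i j, k i j = k j i)
    (Hbeta : 0 <= beta) :
  exists c : R, 0 < c /\
  forall (blk : forall n : nat, 'I_n -> 'I_m),
    (forall n, admissible p n -> block_sizes_ok p (blk n)) ->
  forall (sig sig' : forall n : nat, Omega n),
    (forall n, admissible p n ->
       forall i, @magnetization R _ _ (blk n) (sig n) i = @magnetization R _ _ (blk n) (sig' n) i) ->
  exists mu : forall n : nat, traj n (horizon c n) * traj n (horizon c n) -> R,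
    (forall n, admissible p n -> is_coupling k beta (blk n) (sig n) (sig' n) (mu n)) /\
    (forall eps : R, 0 < eps -> exists N : nat, forall n, admissible p n -> (N <= n)%N ->
       prob_not_met (mu n) <= eps).
Proof.
have k_ge0 i j : 0 <= k i j by apply: ltW.
pose eta := expR (- (2 * (beta * ktot k))).
have eta_gt0 : 0 < eta by apply: expR_gt0.
have eta_le1 : eta <= 1.
  by rewrite -expR0 ler_expR oppr_le0 !mulr_ge0 ?ktot_ge0.
exists (2 / eta); split=> [|blk _ sig sig' same_magn]; first by rewrite divr_gt0.
exists (fun n => coupled_path_law (coupling_kernel k beta (blk n)) (sig n) (sig' n) (T := _)).
split=> [n [n_gt0 _]|eps eps_gt0].
  split=> [ab|a|b].
  - by apply: coupled_path_law_ge0 => *; apply: coupling_kernel_ge0.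
  - by apply: coupled_path_law_marginl => *; apply: coupling_kernel_marginl.
  - by apply: coupled_path_law_marginr => *; apply: coupling_kernel_marginr.
exists (Num.truncn (expR 1 / eps)).+1 => n adm n_large; have [n_gt0 _] := adm.
have bal : balanced R (blk n) (sig n, sig' n).
  by apply/forallP => i; rewrite (same_magn n adm).
have eta_le x v s : eta / 2 <= spin_prob k beta (blk n) x v s by exact: spin_prob_lb.
apply: le_trans (glauber_coupling_tail n_gt0 _ eta_le bal) _.
apply: le_trans (horizon_tail eta_gt0 eta_le1 n_gt0) _.
rewrite ler_pdivrMr ?ltr0n // mulrC -ler_pdivrMr //.
by rewrite ltW // (lt_le_trans (truncnS_gt _)) // ler_nat.
Qed.
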